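(* Let $D$ be a directed graph whose minimum feedback vertex set has cardinality exactly one. Then for an integer $q\ge 2$, $D$ is $q$-solvable if and only if $q=2$.
   Context: A directed graph $D=(V,E)$ has arcs $E \subseteq \{(u,v)\in V^2 : u \neq v\}$ (bidirectional pairs allowed, forming directed cycles of length 2). A feedback vertex set is a set $S\subseteq V$ such that $D-S$ contains no directed cycle. $N^-(v)=\{u:(u,v)\in E\}$. For $q\ge2$ let $[q]=\{0,\dots,q-1\}$. A $D$-function over $[q]$ is a map $f=(f_v)_{v\in V}:[q]^V\to[q]^V$ with each $f_v(x)$ depending only on $(x_u)_{u\in N^-(v)}$. $D$ is $q$-solvable if some $D$-function $f$ over $[q]$ has the property that for every $x\in[q]^V$ there is $v$ with $f_v(x)=x_v$. *)

From mathcomp Require Import all_boot.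
Set Implicit Arguments. Unset Strict Implicit. Unset Printing Implicit Defensive.

(* A directed graph D = (V, E): finite vertex type V, arc relation E : rel V,
   (u,v) is an arc iff E u v.  Loops are excluded by the hypothesis
   [irreflexive E]; bidirectional pairs are allowed. *)

Definition dcycle_avoiding (V : finType) (E : rel V) (S : {set V}) (s : seq V) :=
  [/\ s != [::], uniq s, cycle E s & all (fun v => v \notin S) s].

Definition feedback_vertex_set (V : finType) (E : rel V) (S : {set V}) : Prop :=
  forall s : seq V, ~ dcycle_avoiding E S s.

Definition min_fvs_card (V : finType) (E : rel V) (k : nat) : Prop :=
  (exists S : {set V}, feedback_vertex_set E S /\ #|S| = k) /\
  (forall S : {set V}, feedback_vertex_set E S -> k <= #|S|).

Definition D_function (V : finType) (E : rel V) (q : nat)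
    (f : {ffun V -> 'I_q} -> {ffun V -> 'I_q}) : Prop :=
  forall (v : V) (x y : {ffun V -> 'I_q}),
    (forall u, E u v -> x u = y u) -> f x v = f y v.

Definition q_solvable (V : finType) (E : rel V) (q : nat) : Prop :=
  exists f : {ffun V -> 'I_q} -> {ffun V -> 'I_q},
    D_function E f /\ forall x : {ffun V -> 'I_q}, exists v : V, f x v = x v.

From mathcomp Require Import all_boot.
From Stdlib Require Import Classical.

Set Implicit Arguments. Unset Strict Implicit. Unset Printing Implicit Defensive.

(* Proof strategy.
   (q >= 3 is impossible.)  Let {w} be a feedback vertex set, so D - w is
   acyclic: every nonempty vertex set avoiding w has a "source", a vertex with
   no in-neighbour inside the set (otherwise following in-neighbours inside the
   set would close a directed cycle).  Processing sources one by one gives a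
   greedy assignment: any family of local constraints (each depending only on
   the in-neighbours of its vertex) that is always satisfiable can be satisfied
   simultaneously at all vertices other than w.  Given a D-function f, fix two
   symbols c0, c1 and ask each v <> w to avoid both values f_v takes when x_w
   is reset to c0 or to c1; with q >= 3 symbols this is satisfiable.  As w has
   no loop, f_w does not see x_w, so one of c0, c1 differs from it, and the
   resulting configuration has no fixed point: f is not a solution.
   (q = 2 works.)  Since the empty set is not a feedback vertex set, D has a
   directed cycle s0 ... sk; on it let s0 copy its predecessor and every other
   cycle vertex guess the negation of its predecessor.  If every guess were
   wrong, the value would be constant along the cycle, so s0 guesses right. *)

(* Iterating a map that preserves a nonempty finite set U eventually reaches a
   periodic point of U (pigeonhole on the first #|T| + 1 iterates). *)
Lemma periodic_point (T : finType) (g : T -> T) (U : {set T}) (x0 : T) :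
  x0 \in U -> {in U, forall y, g y \in U} ->
  exists2 x, x \in U & exists k, iter k.+1 g x = x.
Proof.
move=> x0U gU; have iterU n : iter n g x0 \in U.
  by elim: n => //= n IH; apply: gU.
have period m n : m < n -> iter m g x0 = iter n g x0 ->
    exists2 x, x \in U & exists k, iter k.+1 g x = x.
  move=> lt_mn eq_mn; exists (iter m g x0) => //.
  by exists (n - m).-1; rewrite prednK ?subn_gt0 // -iterD subnK ?(ltnW lt_mn).
have /injectivePn [i [j neij hij]] :
    ~~ injectiveb (fun i : 'I_#|T|.+1 => iter i g x0).
  by apply/injectiveP => /leq_card; rewrite card_ord ltnn.
case: (ltngtP i j) => [lt_ij | lt_ji | /val_inj eq_ij].
- exact: period hij.
- exact: period (esym hij).
- by rewrite eq_ij eqxx in neij.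
Qed.

(* If every vertex of a nonempty set U has an in-neighbour in U, then D has a
   directed cycle inside U: iterate the choice of an in-neighbour until it
   becomes periodic, and read the orbit backwards. *)
Lemma closed_set_cycle (V : finType) (E : rel V) (U : {set V}) :
  U != set0 -> (forall v, v \in U -> exists2 u, u \in U & E u v) ->
  exists s, dcycle_avoiding E (~: U) s.
Proof.
case/set0Pn => v0 v0U inU.
pose g v := if [pick u in U | E u v] is Some u then u else v.
have gU v : v \in U -> g v \in U /\ E (g v) v.
  move=> vU; rewrite /g; case: pickP => [u /andP[-> ->] //|noU].
  by case: (inU v vU) => u uU Euv; have := noU u; rewrite uU Euv.
have [x xU periodic] := periodic_point v0U (fun v vU => (gU v vU).1).
have gcycle : fcycle g (orbit g x) by apply/(orbitPcycle 0 3).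
have orbitU : all (mem U) (orbit g x).
  apply/allP => y /trajectP [n _ ->]; elim: n => //= n IH.
  by case: (gU _ IH).
exists (rev (orbit g x)); split.
- by rewrite -size_eq0 size_rev size_orbit -lt0n order_gt0.
- by rewrite rev_uniq orbit_uniq.
- rewrite rev_cycle; apply: (sub_in_cycle (P := mem U)) gcycle => // a b aU _.
  by move/eqP <-; case: (gU a aU).
- by apply/allP => y; rewrite mem_rev inE negbK => /(allP orbitU).
Qed.

Lemma fvs_source (V : finType) (E : rel V) (S U : {set V}) :
  feedback_vertex_set E S -> U != set0 -> [disjoint U & S] ->
  exists2 v, v \in U & forall u, E u v -> u \notin U.
Proof.
move=> fvsS U0 dUS.
have [/exists_inP [v vU /forallP srcv] | nosrc] :=
  boolP [exists v in U, [forall u, E u v ==> (u \notin U)]].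
  by exists v => // u Euv; have := srcv u; rewrite Euv.
have [s [s0 us cs inU]] : exists s, dcycle_avoiding E (~: U) s.
  apply: closed_set_cycle => // v vU.
  move: nosrc; rewrite negb_exists_in => /forall_inP /(_ v vU).
  rewrite negb_forall => /existsP [u].
  by rewrite negb_imply negbK => /andP [Euv uU]; exists u.
case: (fvsS s); split=> //; apply/allP => v /(allP inU).
by rewrite inE negbK => /(disjointFr dUS) ->.
Qed.

Definition set_at (V : finType) (T : Type) (x : {ffun V -> T}) (w : V) (c : T) :
  {ffun V -> T} := [ffun u => if u == w then c else x u].

Section GreedyAssignment.
Variables (V : finType) (E : rel V) (S : {set V}) (T : Type).
Hypothesis fvsS : feedback_vertex_set E S.
Variable ok : V -> {ffun V -> T} -> pred T.
Hypothesis ok_local : forall v (x y : {ffun V -> T}),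
  (forall u, E u v -> x u = y u) -> ok v x =1 ok v y.
Hypothesis ok_feasible : forall v x, exists t, ok v x t.

(* Induction on #|U|: fix a source s of U first, then the rest of U; the
   values at the in-neighbours of s lie outside U and are never touched. *)
Lemma greedy_on (U : {set V}) : [disjoint U & S] -> forall x : {ffun V -> T},
  exists2 y : {ffun V -> T}, {in ~: U, y =1 x} & {in U, forall v, ok v y (y v)}.
Proof.
have [n] := ubnP #|U|; elim: n U => // n IH U /ltnSE leUn dUS x.
have [U0 | [v vU]] := set_0Vmem U.
  by exists x => // v; rewrite U0 inE.
have [s sU srcs] : exists2 s, s \in U & forall u, E u s -> u \notin U.
  by apply: fvs_source => //; apply/set0Pn; exists v.
have [t okt] := ok_feasible s x.
have [||y yx okU] := IH (U :\ s) _ _ (set_at x s t).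
- by move: leUn; rewrite (cardsD1 s U) sU.
- by apply: disjointWl dUS; apply: subsetDl.
have ys : y s = t by rewrite yx ?ffunE ?eqxx // !inE eqxx.
exists y => [u | u uU].
  rewrite inE => uU; rewrite yx ?ffunE; last by rewrite !inE negb_and uU orbT.
  by case: eqP uU => // ->; rewrite sU.
have [-> | nus] := eqVneq u s; last by apply: okU; rewrite !inE nus.
rewrite ys (ok_local (y := set_at x s t)) => [|u' Eu's]; last first.
  by apply: yx; rewrite !inE negb_and srcs ?orbT.
rewrite (ok_local (y := x)) // => u' Eu's; rewrite ffunE.
by case: eqP => // eq_u's; move: (srcs u' Eu's); rewrite eq_u's sU.
Qed.

Lemma greedy_assignment (x : {ffun V -> T}) :
  exists y, forall v, v \notin S -> ok v y (y v).
Proof.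
have [|y _ okS] := greedy_on (U := ~: S) _ x; first by rewrite disjoints_subset.
by exists y => v vS; apply: okS; rewrite inE.
Qed.
End GreedyAssignment.

Lemma avoid_two (q : nat) :
  2 < q -> forall a b : 'I_q, exists c : 'I_q, (c != a) && (c != b).
Proof.
move=> hq a b; have [c] : exists c, c \in ~: [set a; b].
  apply/card_gt0P; have := cardsC [set a; b]; rewrite card_ord cards2 => sum_q.
  rewrite -(ltn_add2l (a != b).+1) sum_q addn0.
  by apply: leq_ltn_trans hq; case: (a != b).
by rewrite !inE negb_or; exists c.
Qed.

Theorem fvs_singleton_not_solvable (V : finType) (E : rel V) (w : V) (q : nat) :
  ~~ E w w -> feedback_vertex_set E [set w] -> 2 < q -> ~ q_solvable E q.
Proof.
move=> Eww fvsw hq [f [fD solvable]].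
pose c0 : 'I_q := Ordinal (ltnW (ltnW hq)); pose c1 : 'I_q := Ordinal (ltnW hq).
pose ok v y t := (t != f (set_at y w c0) v) && (t != f (set_at y w c1) v).
have [v x y xy t|v x|y okS] := greedy_assignment fvsw (ok := ok) _ _ [ffun=> c0].
- have f_set_at c : f (set_at x w c) v = f (set_at y w c) v.
    by apply: fD => u Euv; rewrite !ffunE xy.
  by rewrite /ok !f_set_at.
- exact: avoid_two.
(* f_w ignores x_w, so it takes a single value a; reset x_w to c <> a. *)
pose a := f (set_at y w c0) w; pose c := if a == c0 then c1 else c0.
have fw c' : f (set_at y w c') w = a.
  by apply: fD => u Euw; rewrite !ffunE; case: eqP Euw => // ->; rewrite (negbTE Eww).
have [v] := solvable (set_at y w c); rewrite ffunE.
have [-> | nvw] := eqVneq v w.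
  by rewrite fw /c; case: eqP => [-> /(congr1 val)|].
have := okS v; rewrite inE nvw => /(_ isT) /andP [].
by rewrite /c; case: (a == c0) => neq0 neq1 fix_v; rewrite fix_v eqxx in neq0 neq1.
Qed.

Definition toggle (i : 'I_2) : 'I_2 := if i == ord0 then ord_max else ord0.

Lemma toggle_neq (a b : 'I_2) : toggle a != b -> a = b.
Proof. by rewrite /toggle; case: a b => [[|[|a]] Ha] [[|[|b]] Hb] //= _; apply: val_inj. Qed.

Lemma path_target (T : Type) (P : pred T) (a : T) (s : seq T) :
  path [rel _ b | P b] a s = all P s.
Proof. by elim: s a => //= b s IH a; rewrite IH. Qed.

Lemma cycle_two_solvable (V : finType) (E : rel V) (s : seq V) :
  s != [::] -> uniq s -> cycle E s -> q_solvable E 2.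
Proof.
case: s => [//|s0 t] _; set s := s0 :: t => us cs.
pose f (x : {ffun V -> 'I_2}) : {ffun V -> 'I_2} := [ffun v =>
  if v == s0 then x (prev s v) else if v \in t then toggle (x (prev s v)) else ord0].
exists f; split.
  move=> v x y xy; rewrite !ffunE; case: eqP => [vs0|_].
    by rewrite xy // vs0; apply: (prev_cycle cs); rewrite ?mem_head.
  by case: ifP => // vt; rewrite xy //; apply: (prev_cycle cs); rewrite inE vt orbT.
move=> x; apply: NNPP => nofix.
have nf v : f x v != x v by apply/eqP => fix_v; apply: nofix; exists v.
have /andP [prev_path last_prev] :
    path [rel a b | a == prev s b] s0 t && (last s0 t == prev s s0).
  by rewrite -rcons_path; apply: (cycle_prev us).
(* Every wrong guess at a vertex of t means it copies its predecessor. *)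
have copy_path : path [rel a b | x a == x b] s0 t.
  have : path [rel a b | (a == prev s b) && (b \in t)] s0 t.
    by rewrite path_relI prev_path path_target allss.
  apply: sub_path => a b /andP [/eqP -> bt]; move: (nf b); rewrite ffunE bt.
  have -> : (b == s0) = false by apply: contraNF (andP us).1 => /eqP <-.
  by move=> /toggle_neq /eqP.
have const : all (fun b => x s0 == x b) t.
  by apply: order_path_min copy_path => b a c /= /eqP -> /eqP ->.
move: (mem_last s0 t) (nf s0); rewrite ffunE eqxx -(eqP last_prev) inE.
by case/orP => [/eqP -> | /(allP const) /eqP <-]; rewrite eqxx.
Qed.

Theorem corollary12 (V : finType) (E : rel V) (hirr : irreflexive E)
  (hfvs : min_fvs_card E 1) (q : nat) (hq : 2 <= q) :
  q_solvable E q <-> q = 2.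
Proof.
case: hfvs => [[S [fvsS /eqP /cards1P [w Sw]]] minS]; subst S.
split => [solvable | ->].
  apply/eqP; rewrite eqn_leq hq andbT leqNgt; apply/negP => hq3.
  by apply: fvs_singleton_not_solvable solvable; rewrite ?hirr.
(* The empty set is not a feedback vertex set, so D has a directed cycle. *)
have [s [s_nonempty us cs _]] : exists s, dcycle_avoiding E set0 s.
  apply: NNPP => acyclic; suff: 1 <= #|@set0 V| by rewrite cards0.
  by apply: minS => s cyc; apply: acyclic; exists s.
exact: cycle_two_solvable s_nonempty us cs.
Qed.
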